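(* Let $\mathcal{A}\in\mathcal{T}'_5$ with $c_{13}^4=c_{14}^5=c_{24}^5=0$. Then the automorphisms of $\mathcal{A}$ are exactly the linear maps $\varphi$ given by $\varphi(e_1)=xe_1+a_{41}e_4+a_{51}e_5$, $\varphi(e_2)=a_{12}e_1+ye_2+a_{42}e_4+a_{52}e_5$, $\varphi(e_3)=xye_3$, $\varphi(e_4)=xy^2e_4+a_{54}e_5$, $\varphi(e_5)=x^2y^3e_5$, where $x,y\in\mathbb{C}^*$, $a_{12},a_{42},a_{51},a_{52}\in\mathbb{C}$ are arbitrary, $a_{41}=c_{13}^5x(1-y^2)$ and $a_{54}=xy(a_{12}c_{13}^5-a_{42})$.
   Context: Over $\mathbb{C}$, basis $e_1,\dots,e_n$, $e_ie_j=\sum_kc_{ij}^ke_k$. For $n\ge3$, $\mathcal{T}'_n$ is the family of anticommutative algebra structures with $c_{ij}^k=0$ whenever $k\le\max\{i,j\}$ and $e_ie_{i+1}=e_{i+2}$ for $1\le i\le n-2$, other structure constants arbitrary subject to these and anticommutativity. *)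

(* The ground field C = ℂ is modelled as R[i] = complex R
   for an arbitrary R : realType (the real numbers). *)
From HB Require Import structures.
From mathcomp Require Import all_boot all_order all_algebra.

Set Implicit Arguments. Unset Strict Implicit. Unset Printing Implicit Defensive.
Import Order.TTheory GRing.Theory Num.Theory.
Local Open Scope ring_scope.

Section Defs.
Variable C : fieldType.

(* structure constants c i j k = c_{ij}^k, indices 0-based: c_{ij}^k is
   c (i-1) (j-1) (k-1) *)
Definition sconst (n : nat) := 'I_n -> 'I_n -> 'I_n -> C.

Definition cst (c : sconst 5) (i j k : nat) : C :=
  c (inord i.-1) (inord j.-1) (inord k.-1).

Definition bvec (k : nat) : 'rV[C]_5 := delta_mx 0 (inord k.-1).

Definition amul n (c : sconst n) (u v : 'rV[C]_n) : 'rV[C]_n :=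
  \row_k \sum_(i < n) \sum_(j < n) u 0 i * v 0 j * c i j k.

Definition in_Tprime n (c : sconst n) : Prop :=
  [/\ (3 <= n)%N,
      (forall i j k, c i j k = - c j i k),
      (forall i k, c i i k = 0),
      (forall i j k : 'I_n, (k <= maxn i j)%N -> c i j k = 0) &
      (forall (i j k : 'I_n), j = i.+1 :> nat -> (i.+2 < n)%N ->
         c i j k = (k == i.+2 :> nat)%:R)].

(* an automorphism: a bijective linear map phi (v |-> v *m A, so that row i
   of A is phi(e_{i+1})) with phi(uv) = phi(u) phi(v) *)
Definition is_automorphism n (c : sconst n) (A : 'M[C]_n) : Prop :=
  A \in unitmx /\
  forall u v : 'rV[C]_n, amul c (u *m A) (v *m A) = amul c u v *m A.

End Defs.

From HB Require Import structures.
From mathcomp Require Import all_boot all_order all_algebra.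
From mathcomp Require Import reals complex.
From mathcomp Require Import ring.
Set Implicit Arguments. Unset Strict Implicit. Unset Printing Implicit Defensive.
Import Order.TTheory GRing.Theory Num.Theory.
Local Open Scope ring_scope.

(* Under these conditions the structure constants of A are determined by
   alpha = c_13^5: the only nonzero products of basis vectors are
   e1 e2 = e3, e2 e3 = e4, e3 e4 = e5 and e1 e3 = alpha e5 (up to sign).

   Forward direction: applying multiplicativity to the six products e_i e_j
   with 1 <= i < j <= 4 gives polynomial identities between the entries
   of A; solved in order, they force the lower part of A to vanish,
   the diagonal to be (x, y, xy, xy^2, x^2y^3) and fix the entries a41, a54.
   Invertibility makes the last diagonal entry, hence x and y, nonzero.
   Backward direction: a matrix of that shape is multiplicative (a polynomial
   identity) and has trivial kernel (triangular back-substitution). *)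

Section Coordinates.
Variable F : fieldType.

Definition coord (u : 'rV[F]_5) (l : nat) : F := u 0 (inord l).

Definition entries (A : 'M[F]_5) (i k : nat) : F := A (inord i) (inord k).

Definition vmul (u : nat -> F) (a : nat -> nat -> F) (k : nat) : F :=
  u 0 * a 0 k + u 1 * a 1 k + u 2 * a 2 k + u 3 * a 3 k + u 4 * a 4 k.

Lemma sum_ord5 (G : 'I_5 -> F) :
  \sum_(i < 5) G i = G (inord 0) + G (inord 1) + G (inord 2) + G (inord 3)
                     + G (inord 4).
Proof.
rewrite !big_ord_recr big_ord0 /= add0r.
by congr (_ + _ + _ + _ + _); congr G; apply: val_inj; rewrite /= inordK.
Qed.

Lemma coordP (u v : 'rV[F]_5) :
  (forall k, (k < 5)%N -> coord u k = coord v k) -> u = v.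
Proof.
by move=> H; apply/rowP => q; have := H q (ltn_ord q); rewrite /coord inord_val.
Qed.

Lemma coord0 k : coord (0 : 'rV[F]_5) k = 0.
Proof. by rewrite /coord mxE. Qed.

Lemma coordD (u v : 'rV[F]_5) k : coord (u + v) k = coord u k + coord v k.
Proof. by rewrite /coord mxE. Qed.

Lemma coordZ (s : F) (u : 'rV[F]_5) k : coord (s *: u) k = s * coord u k.
Proof. by rewrite /coord mxE. Qed.

Lemma coord_mulmx (u : 'rV[F]_5) (A : 'M[F]_5) (k : nat) :
  coord (u *m A) k = vmul (coord u) (entries A) k.
Proof. by rewrite /coord mxE sum_ord5. Qed.

Lemma coord_bvec (i k : nat) : (i < 5)%N -> (k < 5)%N ->
  coord (bvec F i.+1) k = (i == k)%:R.
Proof.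
move=> hi hk; rewrite /coord /bvec mxE eqxx /=.
by rewrite -val_eqE /= !inordK // eq_sym.
Qed.

Lemma coord_basis_image (A : 'M[F]_5) (i k : nat) :
  coord (bvec F i.+1 *m A) k = entries A i k.
Proof. by rewrite /bvec -rowE /coord /entries mxE. Qed.

End Coordinates.

Section StructureConstants.
Variable F : fieldType.

Definition basis (i l : nat) : F := (i == l)%:R.

Definition tmul (alpha : F) (u v : nat -> F) (k : nat) : F :=
  match k with
  | 2 => u 0 * v 1 - u 1 * v 0
  | 3 => u 1 * v 2 - u 2 * v 1
  | 4 => alpha * (u 0 * v 2 - u 2 * v 0) + (u 2 * v 3 - u 3 * v 2)
  | _ => 0
  end.

Lemma eq_tmul (alpha : F) (u1 u2 v1 v2 : nat -> F) :
  u1 =1 u2 -> v1 =1 v2 -> tmul alpha u1 v1 =1 tmul alpha u2 v2.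
Proof. by move=> eu ev [|[|[|[|[|k]]]]] //=; rewrite !eu !ev. Qed.

Definition multiplicative (alpha : F) (a : nat -> nat -> F) : Prop :=
  forall (u v : 'rV[F]_5) (k : nat), (k < 5)%N ->
    tmul alpha (vmul (coord u) a) (vmul (coord v) a) k
    = vmul (tmul alpha (coord u) (coord v)) a k.

Variable c : sconst F 5.
Hypothesis Tc : in_Tprime c.
Hypothesis c134 : cst c 1 3 4 = 0.
Hypothesis c145 : cst c 1 4 5 = 0.
Hypothesis c245 : cst c 2 4 5 = 0.
Local Notation alpha := (cst c 1 3 5).

Lemma Tprime5_const (i j k : nat) : (i < 5)%N -> (j < 5)%N -> (k < 5)%N ->
  c (inord i) (inord j) (inord k) = tmul alpha (basis i) (basis j) k.
Proof.
case: Tc => _ c_anti c_diag c_low c_chain.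
have low a b d : (a < 5)%N -> (b < 5)%N -> (d < 5)%N -> (d <= maxn a b)%N ->
    c (inord a) (inord b) (inord d) = 0.
  by move=> ha hb hd hm; apply: c_low; rewrite !inordK.
have chain a d : (a.+2 < 5)%N -> (d < 5)%N ->
    c (inord a) (inord a.+1) (inord d) = (d == a.+2)%:R.
  by move=> ha hd; rewrite c_chain // ?inordK //; exact: ltn_trans ha.
move: c134 c145 c245; rewrite /cst /= => c134' c145' c245'.
rewrite /tmul /basis /=.
do 5?[case: i => [|i]]; do 5?[case: j => [|j]]; do 5?[case: k => [|k]];
  rewrite //= ?mulr1n ?mulr0n ?(oppr0, mulr0, mul0r, mulr1, mul1r, mulrN1,
                                subr0, sub0r, add0r, addr0) => _ _ _;
  first [ by rewrite c_diag
        | by rewrite low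
        | by rewrite chain
        | by rewrite c_anti low ?oppr0
        | by rewrite c_anti chain /= ?mulr0n ?mulr1n ?oppr0
        | by rewrite c_anti ?c134' ?c145' ?c245' ?oppr0
        | by [] ].
Qed.

Lemma coord_amul (u v : 'rV[F]_5) (k : nat) : (k < 5)%N ->
  coord (amul c u v) k = tmul alpha (coord u) (coord v) k.
Proof.
rewrite /coord mxE !sum_ord5.
by do 5?[case: k => [|k]] => // hk; rewrite !Tprime5_const //= /basis /=; ring.
Qed.

Lemma automorphismE (A : 'M[F]_5) :
  is_automorphism c A <-> A \in unitmx /\ multiplicative alpha (entries A).
Proof.
have tmul_image u v k : (k < 5)%N ->
    coord (amul c (u *m A) (v *m A)) k
    = tmul alpha (vmul (coord u) (entries A)) (vmul (coord v) (entries A)) k.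
  move=> hk; rewrite coord_amul //.
  exact: (eq_tmul _ (coord_mulmx u A) (coord_mulmx v A)).
have image_tmul u v k : coord (amul c u v *m A) k
    = vmul (tmul alpha (coord u) (coord v)) (entries A) k.
  by rewrite coord_mulmx /vmul !coord_amul.
split=> -[unitA mulA]; split=> // u v.
- by move=> k hk; rewrite -tmul_image // mulA image_tmul.
- by apply: coordP => k hk; rewrite tmul_image // mulA // image_tmul.
Qed.

End StructureConstants.

Lemma follows_from (F : fieldType) (s P Q L R : F) :
  P = Q -> L - R = s * (P - Q) -> L = R.
Proof. by move=> -> /eqP; rewrite subrr mulr0 subr_eq0 => /eqP. Qed.

Lemma cancel_nonzero (F : fieldType) (x y : F) : y != 0 -> x * y = 0 -> x = 0.
Proof. by move=> y0 /eqP; rewrite mulf_eq0 (negbTE y0) orbF => /eqP. Qed.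

Definition auto_entries (F : fieldType) (alpha x y a12 a42 a51 a52 : F)
    (i k : nat) : F :=
  nth 0 (nth [::] [:: [:: x; 0; 0; alpha * x * (1 - y ^+ 2); a51];
                     [:: a12; y; 0; a42; a52];
                     [:: 0; 0; x * y; 0; 0];
                     [:: 0; 0; 0; x * y ^+ 2; x * y * (a12 * alpha - a42)];
                     [:: 0; 0; 0; 0; x ^+ 2 * y ^+ 3]] i) k.

Section Forward.
Variables (F : fieldType) (alpha : F) (a : nat -> nat -> F).
Hypothesis mul_a : multiplicative alpha a.

Lemma basis_image_product (i j k : nat) :
  (i < 5)%N -> (j < 5)%N -> (k < 5)%N ->
  tmul alpha (a i) (a j) k
  = vmul (tmul alpha (coord (bvec F i.+1)) (coord (bvec F j.+1))) a k.
Proof.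
have image_basis l : (l < 5)%N -> vmul (coord (bvec F l.+1)) a =1 a l.
  move=> hl m; rewrite /vmul !coord_bvec //.
  by move: hl; do 5?[case: l => [|l]] => //= _; ring.
move=> hi hj hk; rewrite -mul_a //.
by apply: eq_tmul => l; rewrite image_basis.
Qed.

Let e1e2 k : (k < 5)%N -> tmul alpha (a 0) (a 1) k = a 2 k.
Proof. by move=> hk; rewrite basis_image_product // /vmul /= !coord_bvec //=; ring. Qed.
Let e2e3 k : (k < 5)%N -> tmul alpha (a 1) (a 2) k = a 3 k.
Proof. by move=> hk; rewrite basis_image_product // /vmul /= !coord_bvec //=; ring. Qed.
Let e3e4 k : (k < 5)%N -> tmul alpha (a 2) (a 3) k = a 4 k.
Proof. by move=> hk; rewrite basis_image_product // /vmul /= !coord_bvec //=; ring. Qed.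
Let e1e3 k : (k < 5)%N -> tmul alpha (a 0) (a 2) k = alpha * a 4 k.
Proof. by move=> hk; rewrite basis_image_product // /vmul /= !coord_bvec //=; ring. Qed.
Let e1e4 k : (k < 5)%N -> tmul alpha (a 0) (a 3) k = 0.
Proof. by move=> hk; rewrite basis_image_product // /vmul /= !coord_bvec //=; ring. Qed.
Let e2e4 k : (k < 5)%N -> tmul alpha (a 1) (a 3) k = 0.
Proof. by move=> hk; rewrite basis_image_product // /vmul /= !coord_bvec //=; ring. Qed.

(* Since e3, e4, e5 are products, their images only involve e3, e4, e5,
   and the diagonal entries multiply along the chain e1 e2 = e3, ... *)
Let a20 : a 2 0 = 0. Proof. by rewrite -e1e2. Qed.
Let a21 : a 2 1 = 0. Proof. by rewrite -e1e2. Qed.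
Let a30 : a 3 0 = 0. Proof. by rewrite -e2e3. Qed.
Let a31 : a 3 1 = 0. Proof. by rewrite -e2e3. Qed.
Let a32 : a 3 2 = 0. Proof. by rewrite -e2e3 //= a20 a21; ring. Qed.
Let a33 : a 3 3 = a 1 1 * a 2 2. Proof. by rewrite -e2e3 //= a21; ring. Qed.
Let a44 : a 4 4 = a 2 2 * a 3 3.
Proof. by rewrite -e3e4 //= a20 a30 a32; ring. Qed.

Lemma last_row_lower k : (k < 4)%N -> a 4 k = 0.
Proof.
by case: k => [|[|[|[|k]]]] //= _; rewrite -e3e4 //= ?a20 ?a21 ?a30 ?a31 ?a32; ring.
Qed.

Hypothesis a44_neq0 : a 4 4 != 0.

Let a22_neq0 : a 2 2 != 0.
Proof. by apply: contraNneq a44_neq0; rewrite a44 => ->; rewrite mul0r. Qed.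
Let a33_neq0 : a 3 3 != 0.
Proof. by apply: contraNneq a44_neq0; rewrite a44 => ->; rewrite mulr0. Qed.

(* The upper part, from e1 e4 = e2 e4 = 0 and e1 e3 = alpha e5. *)
Let a02 : a 0 2 = 0.
Proof.
by apply: (cancel_nonzero a33_neq0); rewrite -(@e1e4 4) //= a30 a32; ring.
Qed.
Let a12 : a 1 2 = 0.
Proof.
by apply: (cancel_nonzero a33_neq0); rewrite -(@e2e4 4) //= a30 a32; ring.
Qed.
Let a01 : a 0 1 = 0.
Proof.
apply: (cancel_nonzero a22_neq0); have := @e1e3 3 isT.
by rewrite /= a21 (@last_row_lower 3) // !mulr0 subr0.
Qed.
Let a22 : a 2 2 = a 0 0 * a 1 1. Proof. by rewrite -e1e2 //= a01; ring. Qed.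
Let a23 : a 2 3 = 0. Proof. by rewrite -e1e2 //= a02 a12; ring. Qed.
Let a24 : a 2 4 = 0. Proof. by rewrite -e1e2 //= a02 a12; ring. Qed.
Let a34 : a 3 4 = a 2 2 * (alpha * a 1 0 - a 1 3).
Proof. by rewrite -e2e3 //= a12 a20 a23; ring. Qed.
Let a03 : a 0 3 = alpha * a 0 0 * (1 - a 1 1 ^+ 2).
Proof.
apply: (mulIf a22_neq0) => /=.
apply: (follows_from (s := -1) (@e1e3 4 isT)).
by rewrite /= a02 a20 a44 a33 a22; ring.
Qed.

Lemma diagonal_neq0 : a 0 0 != 0 /\ a 1 1 != 0.
Proof. by move: a22_neq0; rewrite a22 mulf_eq0 negb_or => /andP. Qed.

Lemma entries_normal_form (i k : nat) : (i < 5)%N -> (k < 5)%N ->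
  a i k = auto_entries alpha (a 0 0) (a 1 1) (a 1 0) (a 1 3) (a 0 4) (a 1 4) i k.
Proof.
have a4 k' : (k' < 4)%N -> a 4 k' = 0 by exact: last_row_lower.
rewrite /auto_entries.
do 5?[case: i => [|i]] => //= _; do 5?[case: k => [|k]] => //= _;
  rewrite ?a44 ?a4 ?a01 ?a02 ?a03 ?a12 ?a20 ?a21 ?a22 ?a23 ?a24
          ?a30 ?a31 ?a32 ?a33 ?a34 ?a22 //; ring.
Qed.

End Forward.

Section Backward.
Variables (F : fieldType) (alpha x y a12 a42 a51 a52 : F).
Variable a : nat -> nat -> F.
Hypothesis a_nf : forall i k, (i < 5)%N -> (k < 5)%N ->
  a i k = auto_entries alpha x y a12 a42 a51 a52 i k.

Lemma normal_form_multiplicative : multiplicative alpha a.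
Proof.
move=> u v k; rewrite /vmul.
by do 5?[case: k => [|k]] => //= _; rewrite !a_nf // /auto_entries /=; ring.
Qed.

Hypotheses (x_neq0 : x != 0) (y_neq0 : y != 0).

(* Trivial kernel: solve w a = 0 for w1, w0, w2, w3, w4 in this order. *)
Lemma normal_form_kernel (w : nat -> F) :
  (forall k, (k < 5)%N -> vmul w a k = 0) -> forall l, (l < 5)%N -> w l = 0.
Proof.
move=> wa0.
have wa k : (k < 5)%N ->
    vmul w a k = vmul w (auto_entries alpha x y a12 a42 a51 a52) k.
  by move=> hk; rewrite /vmul !a_nf.
have w1 : w 1 = 0.
  apply: (cancel_nonzero y_neq0).
  by rewrite -(@wa0 1) // wa // /vmul /auto_entries /=; ring.
have w0 : w 0 = 0.
  apply: (cancel_nonzero x_neq0).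
  by rewrite -(@wa0 0) // wa // /vmul /auto_entries /= w1; ring.
have w2 : w 2 = 0.
  apply: (cancel_nonzero (mulf_neq0 x_neq0 y_neq0)).
  by rewrite -(@wa0 2) // wa // /vmul /auto_entries /= w0 w1; ring.
have w3 : w 3 = 0.
  apply: (cancel_nonzero (mulf_neq0 x_neq0 (expf_neq0 2 y_neq0))).
  by rewrite -(@wa0 3) // wa // /vmul /auto_entries /= w0 w1 w2; ring.
have w4 : w 4 = 0.
  apply: (cancel_nonzero (mulf_neq0 (expf_neq0 2 x_neq0) (expf_neq0 3 y_neq0))).
  by rewrite -(@wa0 4) // wa // /vmul /auto_entries /= w0 w1 w2 w3; ring.
by case=> [|[|[|[|[|l]]]]].
Qed.

End Backward.

Section Matrices.
Variable F : fieldType.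

Lemma last_entry_neq0 (A : 'M[F]_5) : A \in unitmx ->
  (forall k, (k < 4)%N -> entries A 4 k = 0) -> entries A 4 4 != 0.
Proof.
move=> unitA low; apply/eqP => a44.
have : bvec F 5 *m A = 0.
  apply: coordP => k hk; rewrite coord_basis_image coord0.
  by have [/low|] := ltnP k 4; last by case: k hk => [|[|[|[|[|]]]]].
move/eqP; rewrite mulmx_free_eq0 ?row_free_unit //.
move=> /eqP/(congr1 (fun u => coord u 4)).
by rewrite coord_bvec // coord0; apply/eqP; rewrite oner_neq0.
Qed.

Lemma normal_form_unitmx (alpha x y a12 a42 a51 a52 : F) (A : 'M[F]_5) :
  (forall i k, (i < 5)%N -> (k < 5)%N ->
     entries A i k = auto_entries alpha x y a12 a42 a51 a52 i k) ->
  x != 0 -> y != 0 -> A \in unitmx.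
Proof.
move=> A_nf x_neq0 y_neq0; rewrite -row_free_unit.
apply/inj_row_free => v vA0; apply: coordP => l hl; rewrite coord0.
apply: (normal_form_kernel A_nf x_neq0 y_neq0) => // k _.
by rewrite -coord_mulmx vA0 coord0.
Qed.

Lemma rows_normal_formP (alpha x y a12 a42 a51 a52 : F) (A : 'M[F]_5) :
  [/\ bvec F 1 *m A = x *: bvec F 1 + (alpha * x * (1 - y ^+ 2)) *: bvec F 4
                      + a51 *: bvec F 5,
      bvec F 2 *m A = a12 *: bvec F 1 + y *: bvec F 2 + a42 *: bvec F 4
                      + a52 *: bvec F 5,
      bvec F 3 *m A = (x * y) *: bvec F 3,
      bvec F 4 *m A = (x * y ^+ 2) *: bvec F 4
                      + (x * y * (a12 * alpha - a42)) *: bvec F 5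
    & bvec F 5 *m A = (x ^+ 2 * y ^+ 3) *: bvec F 5]
  <-> forall i k, (i < 5)%N -> (k < 5)%N ->
        entries A i k = auto_entries alpha x y a12 a42 a51 a52 i k.
Proof.
split=> [[r1 r2 r3 r4 r5] i k hi hk | A_nf].
  rewrite -coord_basis_image; move: hi.
  do 5?[case: i => [|i]] => //= _;
    rewrite ?r1 ?r2 ?r3 ?r4 ?r5 ?coordD !coordZ !coord_bvec //; move: hk;
    by do 5?[case: k => [|k]] => //= _; rewrite /auto_entries /=; ring.
by split; apply: coordP => k hk; rewrite coord_basis_image A_nf //
  ?coordD !coordZ !coord_bvec //; move: hk;
  do 5?[case: k => [|k]] => //= _; rewrite /auto_entries /=; ring.
Qed.

End Matrices.

Local Open Scope complex_scope.

Theorem mainTheorem15 (R : realType) (c : sconst R[i] 5) :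
  in_Tprime c ->
  cst c 1 3 4 = 0 -> cst c 1 4 5 = 0 -> cst c 2 4 5 = 0 ->
  forall A : 'M[R[i]]_5,
    is_automorphism c A <->
    exists (x y a12 a42 a51 a52 : R[i]),
      [/\ x != 0, y != 0 &
      [/\ bvec R[i] 1 *m A = x *: bvec R[i] 1
                          + (cst c 1 3 5 * x * (1 - y ^+ 2)) *: bvec R[i] 4
                          + a51 *: bvec R[i] 5,
          bvec R[i] 2 *m A = a12 *: bvec R[i] 1 + y *: bvec R[i] 2
                          + a42 *: bvec R[i] 4 + a52 *: bvec R[i] 5,
          bvec R[i] 3 *m A = (x * y) *: bvec R[i] 3,
          bvec R[i] 4 *m A = (x * y ^+ 2) *: bvec R[i] 4
                          + (x * y * (a12 * cst c 1 3 5 - a42)) *: bvec R[i] 5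
        & bvec R[i] 5 *m A = (x ^+ 2 * y ^+ 3) *: bvec R[i] 5]].
Proof.
move=> Tc c134 c145 c245 A; rewrite automorphismE //.
split=> [[unitA mulA] | [x [y [a12 [a42 [a51 [a52 [x_neq0 y_neq0]]]]]]]].
- have a44_neq0 := last_entry_neq0 unitA (last_row_lower mulA).
  have [x_neq0 y_neq0] := diagonal_neq0 mulA a44_neq0.
  exists (entries A 0 0), (entries A 1 1), (entries A 1 0), (entries A 1 3),
    (entries A 0 4), (entries A 1 4).
  by split=> //; apply/rows_normal_formP => i k; apply: entries_normal_form.
- move/rows_normal_formP => A_nf; split.
    exact: normal_form_unitmx A_nf x_neq0 y_neq0.
  exact: normal_form_multiplicative A_nf.
Qed.
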